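(* For any monotone total order $T$ on $\Omega$ and any homogeneous sample $\mathbf{S}_k = (S_k,\dots,S_k) \in \Omega$, $$\Omega(\mathbf{S}_k, T_\ell) \subseteq \Omega(\mathbf{S}_k, T) \subseteq \Omega(\mathbf{S}_k, T_h).$$
   Context: Let $S \subset \mathbb{R}$ be a finite set and $\Omega$ the set of samples of size $n$ with entries in $S$, identified with their sorted versions $x_{(1)} \le \dots \le x_{(n)}$. For $\mathbf{x},\mathbf{y} \in \Omega$ write $\mathbf{x} \le \mathbf{y}$ if $x_{(j)} \le y_{(j)}$ for all $j$. A total order $T$ on $\Omega$ is monotone if $\mathbf{x} \le \mathbf{y}$ implies $\mathbf{x} \le_T \mathbf{y}$. For a total order $T$, the upper set is $\Omega(\mathbf{x},T) = \{\mathbf{y} \in \Omega : \mathbf{x} \le_T \mathbf{y}\}$. The low lexicographic order $T_\ell$: $\mathbf{x} \le_{T_\ell} \mathbf{y}$ iff $\mathbf{x} = \mathbf{y}$ or, for the smallest index $j$ with $x_{(j)} \ne y_{(j)}$, $x_{(j)} < y_{(j)}$. The high lexicographic order $T_h$: same but with the largest such index $j$. *)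

From mathcomp Require Import all_boot all_order all_algebra.
From mathcomp Require Import reals.
Set Implicit Arguments. Unset Strict Implicit. Unset Printing Implicit Defensive.
Import Order.TTheory GRing.Theory Num.Theory.
Local Open Scope ring_scope.

Section Defs.
Variables (R : realType) (S : seq R) (n : nat).

(* Omega: samples of size n with entries in S, identified with their sorted
   versions, i.e. nondecreasing n-tuples x_(1) <= ... <= x_(n) with entries in S. *)
Definition in_Omega (x : n.-tuple R) : bool :=
  all (fun a => a \in S) x && sorted <=%R (tval x).

Definition le_cw (x y : n.-tuple R) : bool :=
  [forall j : 'I_n, tnth x j <= tnth y j].

Definition total_order_on (T : rel (n.-tuple R)) : Prop :=
  [/\ (forall x, in_Omega x -> T x x),
      (forall x y, in_Omega x -> in_Omega y -> T x y -> T y x -> x = y),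
      (forall x y z, in_Omega x -> in_Omega y -> in_Omega z ->
          T x y -> T y z -> T x z)
    & (forall x y, in_Omega x -> in_Omega y -> T x y || T y x)].

Definition monotone_order (T : rel (n.-tuple R)) : Prop :=
  forall x y, in_Omega x -> in_Omega y -> le_cw x y -> T x y.

Definition upper_set (T : rel (n.-tuple R)) (x : n.-tuple R) : pred (n.-tuple R) :=
  [pred y | in_Omega y && T x y].

Definition low_lex : rel (n.-tuple R) := fun x y =>
  (x == y) || [exists j : 'I_n, (tnth x j < tnth y j) &&
      [forall i : 'I_n, (i < j)%N ==> (tnth x i == tnth y i)]].

Definition high_lex : rel (n.-tuple R) := fun x y =>
  (x == y) || [exists j : 'I_n, (tnth x j < tnth y j) &&
      [forall i : 'I_n, (j < i)%N ==> (tnth x i == tnth y i)]].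

Definition hom_sample (s : R) : n.-tuple R := [tuple of nseq n s].

End Defs.

From mathcomp Require Import all_boot all_order all_algebra.
From mathcomp Require Import reals.
Set Implicit Arguments. Unset Strict Implicit. Unset Printing Implicit Defensive.
Import Order.TTheory GRing.Theory Num.Theory.
Local Open Scope ring_scope.

(* Write h = (s, ..., s). If h <=_{T_l} y with y sorted, then y agrees with h
   up to the first index j where y_j > s, and from j on y stays above y_j > s;
   so h <= y componentwise and monotonicity gives h <=_T y. Conversely, if
   h <=_T y and y <> h, antisymmetry of T forbids y <= h componentwise, so some
   y_j exceeds s and hence so does the last entry y_n of the sorted y; the
   largest index where h and y differ is then n, where h_n < y_n, which is
   h <=_{T_h} y. *)

Lemma sorted_le_tnth (d : Order.disp_t) (T : porderType d) (n : nat)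
    (y : n.-tuple T) (i j : 'I_n) :
  sorted <=%O (tval y) -> (i <= j)%N -> (tnth y i <= tnth y j)%O.
Proof.
move=> y_sorted le_ij; pose y0 := tnth y i; rewrite !(tnth_nth y0).
by apply: (sorted_leq_nth le_trans lexx) => //; rewrite inE size_tuple.
Qed.

Section HomogeneousSample.
Variables (R : realType) (n : nat).

Lemma hom_sample_in_Omega (S : seq R) (s : R) :
  s \in S -> in_Omega S (hom_sample n s).
Proof.
move=> sS; apply/andP; split; first by apply/allP => x /nseqP [-> _].
by rewrite /=; elim: n => [|[|m] IH] //=; rewrite lexx.
Qed.

Lemma low_lex_hom_sample_le_cw (s : R) (y : n.-tuple R) :
  sorted <=%R (tval y) -> low_lex (hom_sample n s) y -> le_cw (hom_sample n s) y.
Proof.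
move=> y_sorted /orP [/eqP <-|/existsP [j /andP [lt_sy /forallP eq_before]]].
  by apply/forallP => k.
apply/forallP => k; rewrite tnth_nseq; have [lt_kj|le_jk] := ltnP k j.
  by move/implyP: (eq_before k) => /(_ lt_kj) /eqP <-; rewrite tnth_nseq.
rewrite tnth_nseq in lt_sy.
exact: le_trans (ltW lt_sy) (sorted_le_tnth y_sorted le_jk).
Qed.

Lemma high_lex_last (x y : n.-tuple R) (j : 'I_n) :
  j.+1 = n -> tnth x j < tnth y j -> high_lex x y.
Proof.
move=> j_last lt_xy; apply/orP; right; apply/existsP; exists j.
rewrite lt_xy; apply/forallP => i; apply/implyP => lt_ji.
have le_ij : (i <= j)%N by rewrite -ltnS j_last.
by rewrite leqNgt lt_ji in le_ij.
Qed.

Lemma not_le_cw_hom_sample_high_lex (s : R) (y : n.-tuple R) :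
  sorted <=%R (tval y) -> ~~ le_cw y (hom_sample n s) -> high_lex (hom_sample n s) y.
Proof.
move=> y_sorted; rewrite negb_forall => /existsP [j]; rewrite tnth_nseq -ltNge.
have n_gt0 : (0 < n)%N := leq_ltn_trans (leq0n j) (ltn_ord j).
have last_lt : (n.-1 < n)%N by rewrite prednK.
move=> lt_sy; apply: (@high_lex_last _ _ (Ordinal last_lt)); first exact: prednK.
rewrite tnth_nseq; apply: lt_le_trans lt_sy (sorted_le_tnth y_sorted _).
by rewrite /= -ltnS prednK.
Qed.

End HomogeneousSample.

Theorem theorem3 (R : realType) (S : seq R) (n : nat) (T : rel (n.-tuple R)) :
  total_order_on S T -> monotone_order S T ->
  forall s : R, s \in S ->
    {subset upper_set S (@low_lex R n) (hom_sample n s) <= upper_set S T (hom_sample n s)} /\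
    {subset upper_set S T (hom_sample n s) <= upper_set S (@high_lex R n) (hom_sample n s)}.
Proof.
move=> [_ T_antisym _ _] T_mono s sS; have h_in := hom_sample_in_Omega n sS.
split=> y; rewrite !inE => /andP [y_in le_hy]; rewrite y_in /=;
  have y_sorted : sorted <=%R (tval y) by case/andP: y_in.
- by apply: T_mono => //; exact: low_lex_hom_sample_le_cw.
- have [le_yh|not_le_yh] := boolP (le_cw y (hom_sample n s)).
    by rewrite (T_antisym _ _ h_in y_in le_hy (T_mono _ _ y_in h_in le_yh)) /high_lex eqxx.
  exact: not_le_cw_hom_sample_high_lex not_le_yh.
Qed.
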